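(* Let $\Sigma$ be a finite set of tokens, let $q$ be a query, and let $\pi_\theta$, $\pi_{\theta_{old}}$, $\pi_{\theta_{ref}}$ be policies, i.e. conditional distributions assigning a positive probability $\pi(x \mid q, y)$ to each token $x\in\Sigma$ given $q$ and a prefix $y\in\Sigma^*$. Let $\mathbb{G}=(g_1,\dots,g_k)$ be a group of $k\ge 1$ nonempty trajectories $g_i\in\Sigma^*$ (e.g. sampled from $\pi_\theta(\cdot\mid q)$), with real outcome-level rewards $r_1,\dots,r_k$, and assume $r_{std}(\mathbb{G})\neq 0$. Then $$L_{GRPO}(\mathbb{G}) = L_{PRM}(\mathbb{G}),$$ where $$L_{GRPO}(\mathbb{G})=\frac{1}{\sum_{i=1}^k \mathrm{len}(g_i)}\sum_{i=1}^k\sum_{t=0}^{\mathrm{len}(g_i)-1}\big(P_{i,t}\, a_i - D_{i,t}\big),\qquad L_{PRM}(\mathbb{G})=\frac{1}{\sum_{i=1}^k \mathrm{len}(g_i)}\sum_{i=1}^k\sum_{t=0}^{\mathrm{len}(g_i)-1}\big(P_{i,t}\, A_{i,t} - D_{i,t}\big),$$ with all quantities as defined in the context.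
   Context: For a trajectory $g_i$, $\mathrm{len}(g_i)$ is its number of tokens, $g_i[t]$ (for $0\le t<\mathrm{len}(g_i)$) is its $t$-th token (0-indexed), and $g_i[:t]$ is the prefix consisting of its first $t$ tokens. $r_{mean}(\mathbb{G})=\frac1k\sum_{i=1}^k r_i$ and $r_{std}(\mathbb{G})$ is the standard deviation of $r_1,\dots,r_k$. The (outcome-level GRPO) advantage is $a_i=(r_i-r_{mean}(\mathbb{G}))/r_{std}(\mathbb{G})$. For $0\le t<\mathrm{len}(g_i)$: $P_{i,t}=\dfrac{\pi_\theta(g_i[t]\mid q,g_i[:t])}{\pi_{\theta_{old}}(g_i[t]\mid q,g_i[:t])}$ and $D_{i,t}=\dfrac{\pi_{\theta_{ref}}(g_i[t]\mid q,g_i[:t])}{\pi_\theta(g_i[t]\mid q,g_i[:t])}-\ln\dfrac{\pi_{\theta_{ref}}(g_i[t]\mid q,g_i[:t])}{\pi_\theta(g_i[t]\mid q,g_i[:t])}-1$. Process steps: the trajectories of $\mathbb{G}$ form a prefix tree whose nodes (''process sets'') are sets of trajectories sharing a common prefix. For $0\le t<\mathrm{len}(g_i)$, the process set containing token $t$ of $g_i$ is $\lambda^{(i,t)}=\{g_j\in\mathbb{G} : \mathrm{len}(g_j)>t \text{ and } g_j[:t+1]=g_i[:t+1]\}$ (the set of trajectories that agree with $g_i$ on its first $t+1$ tokens). The step-level (Monte Carlo) reward of a process set $\lambda$ is $\hat R(\lambda)=\frac{1}{|\lambda|}\sum_{g_j\in\lambda} r_j$; the token-level reward is $R_{i,t}=\hat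 R(\lambda^{(i,t)})$, and the step-level advantage is $A_{i,t}=(R_{i,t}-r_{mean}(\mathbb{G}))/r_{std}(\mathbb{G})$. *)

From HB Require Import structures.
From mathcomp Require Import all_boot all_order all_algebra.
From mathcomp Require Import reals exp.
Set Implicit Arguments. Unset Strict Implicit. Unset Printing Implicit Defensive.
Import Order.TTheory GRing.Theory Num.Theory.
Local Open Scope ring_scope.

Section GRPO.
Variables (R : realType) (Sigma : finType) (Query : Type).

(* A policy: pi q y x = probability of token x given query q and prefix y. *)
Definition is_policy (pi : Query -> seq Sigma -> Sigma -> R) : Prop :=
  (forall q y x, 0 < pi q y x) /\ (forall q y, \sum_(x : Sigma) pi q y x = 1).

Variables (k : nat) (g : 'I_k -> seq Sigma) (r : 'I_k -> R).

Definition tok (i : 'I_k) (t : 'I_(size (g i))) : Sigma := tnth (in_tuple (g i)) t.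

Definition r_mean : R := (\sum_(i < k) r i) / k%:R.
Definition r_std : R := Num.sqrt ((\sum_(i < k) (r i - r_mean) ^+ 2) / k%:R).
Definition adv (i : 'I_k) : R := (r i - r_mean) / r_std.

Variables (q : Query) (pi_theta pi_old pi_ref : Query -> seq Sigma -> Sigma -> R).

Definition Pratio (i : 'I_k) (t : 'I_(size (g i))) : R :=
  pi_theta q (take t (g i)) (tok t) / pi_old q (take t (g i)) (tok t).

Definition Dkl (i : 'I_k) (t : 'I_(size (g i))) : R :=
  let rho := pi_ref q (take t (g i)) (tok t) / pi_theta q (take t (g i)) (tok t) in
  rho - ln rho - 1.

Definition proc_set (i : 'I_k) (t : nat) : {set 'I_k} :=
  [set j | (t < size (g j))%N && (take t.+1 (g j) == take t.+1 (g i))].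

Definition step_reward (lam : {set 'I_k}) : R :=
  (\sum_(j in lam) r j) / (#|lam|%:R).

Definition tok_reward (i : 'I_k) (t : nat) : R := step_reward (proc_set i t).

Definition step_adv (i : 'I_k) (t : nat) : R := (tok_reward i t - r_mean) / r_std.

Definition total_len : nat := \sum_(i < k) size (g i).

Definition L_GRPO : R :=
  (\sum_(i < k) \sum_(t < size (g i)) (Pratio t * adv i - Dkl t)) / (total_len%:R).

Definition L_PRM : R :=
  (\sum_(i < k) \sum_(t < size (g i)) (Pratio t * step_adv i t - Dkl t)) / (total_len%:R).

End GRPO.

From HB Require Import structures.
From mathcomp Require Import all_boot all_order all_algebra.
From mathcomp Require Import reals exp.
From mathcomp Require Import ring.
Set Implicit Arguments. Unset Strict Implicit. Unset Printing Implicit Defensive.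
Import Order.TTheory GRing.Theory Num.Theory.
Local Open Scope ring_scope.

(** At a fixed depth t the trajectories of length > t are partitioned into the
    process sets λ^(i,t), i.e. according to the prefix g_i[:t+1].  The ratio
    P_{i,t} depends only on that prefix, hence is constant on each process set,
    while R_{i,t} is the mean reward over it; so Σ_i P_{i,t} R_{i,t} =
    Σ_i P_{i,t} r_i for every t.  As a_i - A_{i,t} = (r_i - R_{i,t}) / r_std,
    the numerators of L_GRPO and L_PRM coincide. *)

Section ClassMean.
Variables (R : numFieldType) (I : finType) (T : eqType).
Variables (P : pred I) (key : I -> T).

Definition key_class (i : I) : {set I} := [set j | P j && (key j == key i)].

Lemma key_class_sym i j : P i && (j \in key_class i) = P j && (i \in key_class j).
Proof. by rewrite !inE andbCA eq_sym. Qed.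

Lemma key_class_key i j : j \in key_class i -> key j = key i.
Proof. by rewrite inE => /andP[_ /eqP]. Qed.

Lemma key_class_eq i j : j \in key_class i -> key_class j = key_class i.
Proof. by move=> /key_class_key Eji; apply/setP => x; rewrite !inE Eji. Qed.

Lemma sum_key_class_const i (c : R) :
  P i -> \sum_(j in key_class i) c / #|key_class i|%:R = c.
Proof.
move=> Pi; have : (0 < #|key_class i|)%N.
  by apply/card_gt0P; exists i; rewrite inE Pi eqxx.
by rewrite sumr_const -[_ *+ _]mulr_natr lt0n -(pnatr_eq0 R) => /mulfVK.
Qed.

Lemma sum_mul_key_class_mean (h : T -> R) (r : I -> R) :
  \sum_(i | P i) h (key i) * ((\sum_(j in key_class i) r j) / #|key_class i|%:R)
  = \sum_(i | P i) h (key i) * r i.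
Proof.
under eq_bigr do rewrite mulr_suml mulr_sumr.
(* Every j is reached once from each member of its class, with weight 1/|class|. *)
rewrite (exchange_big_dep P) /=; last by move=> i j _; rewrite inE => /andP[].
apply: eq_bigr => j Pj.
rewrite (eq_bigl (mem (key_class j))); last by move=> i; rewrite key_class_sym Pj.
under eq_bigr => i /[dup] /key_class_key -> /key_class_eq -> do rewrite mulrA.
exact: sum_key_class_const.
Qed.

End ClassMean.

Lemma exchange_big_ord_widen {R : nmodType} {I : finType} {n : I -> nat} {N : nat}
    (le_nN : forall i, (n i <= N)%N) (F : I -> nat -> R) :
  \sum_i \sum_(t < n i) F i t = \sum_(t < N) \sum_(i | (t < n i)%N) F i t.
Proof.
under eq_bigr => i _ do rewrite (big_ord_widen N (F i) (le_nN i)).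
exact: exchange_big_dep.
Qed.

Section GroupSums.
Variables (R : realType) (Sigma : finType) (Query : Type) (q : Query).
Variables (pi_theta pi_old : Query -> seq Sigma -> Sigma -> R).

Definition prefix_ratio (y : seq Sigma) : R :=
  if rev y is x :: ry then pi_theta q (rev ry) x / pi_old q (rev ry) x else 0.

Variables (k : nat) (g : 'I_k -> seq Sigma) (r : 'I_k -> R).

Lemma Pratio_prefix i (t : 'I_(size (g i))) :
  Pratio q pi_theta pi_old t = prefix_ratio (take t.+1 (g i)).
Proof.
set x0 := tok t; rewrite /prefix_ratio (take_nth x0 (ltn_ord t)) rev_rcons revK.
by rewrite /Pratio /tok (tnth_nth x0).
Qed.

Lemma size_le_total_len i : (size (g i) <= total_len g)%N.
Proof. by rewrite /total_len (bigD1 i) //= leq_addr. Qed.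

Lemma sum_Pratio_mul_tok_reward :
  \sum_(i < k) \sum_(t < size (g i)) Pratio q pi_theta pi_old t * tok_reward g r i t
  = \sum_(i < k) \sum_(t < size (g i)) Pratio q pi_theta pi_old t * r i.
Proof.
under eq_bigr do under eq_bigr do rewrite Pratio_prefix.
under [RHS]eq_bigr do under eq_bigr do rewrite Pratio_prefix.
rewrite (exchange_big_ord_widen size_le_total_len
  (fun i t => prefix_ratio (take t.+1 (g i)) * tok_reward g r i t)).
rewrite (exchange_big_ord_widen size_le_total_len
  (fun i t => prefix_ratio (take t.+1 (g i)) * r i)).
apply: eq_bigr => t _.
exact: (sum_mul_key_class_mean (fun j => t < size (g j))%N (fun j => take t.+1 (g j))).
Qed.

Lemma sum_Pratio_mul_adv_sub :
  \sum_(i < k) \sum_(t < size (g i))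
    Pratio q pi_theta pi_old t * (adv r i - step_adv g r i t) = 0.
Proof.
have adv_sub i (t : nat) : adv r i - step_adv g r i t = (r i - tok_reward g r i t) / r_std r.
  by rewrite /adv /step_adv; ring.
under eq_bigr do under eq_bigr do rewrite adv_sub mulrA mulrBr.
under eq_bigr do rewrite -mulr_suml sumrB.
by rewrite -mulr_suml sumrB sum_Pratio_mul_tok_reward subrr mul0r.
Qed.

End GroupSums.

Theorem theorem1 (R : realType) (Sigma : finType) (Query : Type) (q : Query)
    (pi_theta pi_old pi_ref : Query -> seq Sigma -> Sigma -> R)
    (Hth : @is_policy R Sigma Query pi_theta) (Hold : @is_policy R Sigma Query pi_old)
    (Href : @is_policy R Sigma Query pi_ref)
    (k : nat) (hk : (0 < k)%N)
    (g : 'I_k -> seq Sigma) (hg : forall i, (0 < size (g i))%N)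
    (r : 'I_k -> R) (hstd : @r_std R k r != 0) :
  @L_GRPO R Sigma Query k g r q pi_theta pi_old pi_ref =
  @L_PRM R Sigma Query k g r q pi_theta pi_old pi_ref.
Proof.
rewrite /L_GRPO /L_PRM; congr (_ / _); apply: subr0_eq.
rewrite -sumrB -[RHS](sum_Pratio_mul_adv_sub q pi_theta pi_old g r).
apply: eq_bigr => i _; rewrite -sumrB; apply: eq_bigr => t _.
ring.
Qed.
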